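(* For every $k\ge1$ and every word $\gamma_1\gamma_2\cdots\gamma_k\in\{A,B,C\}^k$ there is a continuous function $f_{\gamma_1\cdots\gamma_k}:T\to[0,1]$, independent of $Q$ and $\alpha$, such that for every integer $Q\ge2$ and every irrational $\alpha\in(0,1)$, with $q_1,q_2$ the denominators of the consecutive Farey fractions $a_1/q_1<\alpha<a_2/q_2$ of order $Q-1$, \[ \frac{\#\{\Gamma\in G_{Q,k}(\alpha):\ \Gamma=\gamma_1\gamma_2\cdots\gamma_k\}}{Q}=f_{\gamma_1\cdots\gamma_k}\!\left(\frac{q_1}{Q},\frac{q_2}{Q}\right). \] For $k=1$ one has $f_A(x,y)=1-x$, $f_B(x,y)=1-y$, $f_C(x,y)=x+y-1$.
   Context: $T=\{(x,y): x\le1,\ y\le1,\ x+y\ge1\}$. For irrational $\alpha$, $S_Q(\alpha)$ is the set $\{n\alpha\}$, $0\le n<Q$, on the circle $[0,1]$ with $0\sim1$; its $Q$ gaps have one of three lengths $A=q_1\alpha-a_1$, $B=a_2-q_2\alpha$, $C=A+B$, where $a_1/q_1<\alpha<a_2/q_2$ are consecutive Farey fractions in $[0,1]$ with denominators $<Q$; each gap is labelled by the letter $A$, $B$ or $C$ according to its length. $G_{Q,k}(\alpha)$ is the list (with multiplicity) of the $Q$ words $\gamma_1\cdots\gamma_k$ of labels of $k$ consecutive gaps of $S_Q(\alpha)$, starting at each of the $Q$ gaps in turn and wrapping around $0$. For example $G_{10,2}(\sqrt2)=\{AC,CA,AB,BA,AC,CA,AB,BA,AB,BA\}$. *)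

From Stdlib Require Import Reals Lra Lia Arith List ClassicalEpsilon.
Import ListNotations.
Open Scope R_scope.

Definition inT (x y : R) : Prop := x <= 1 /\ y <= 1 /\ x + y >= 1.

Definition continuous_on_T (f : R -> R -> R) : Prop :=
  forall x y, inT x y -> forall eps, eps > 0 ->
    exists delta, delta > 0 /\
      forall x' y', inT x' y' -> Rabs (x' - x) < delta -> Rabs (y' - y) < delta ->
        Rabs (f x' y' - f x y) < eps.

Definition irrational (a : R) : Prop :=
  forall (p q : Z), IZR q <> 0 -> a <> IZR p / IZR q.

(* a1/q1 < alpha < a2/q2 are consecutive (reduced) Farey fractions in [0,1]
   with denominators < Q, i.e. of order Q-1. *)
Definition farey_consec (Q : nat) (alpha : R) (a1 q1 a2 q2 : nat) : Prop :=
  (1 <= q1 <= Q - 1)%nat /\ (1 <= q2 <= Q - 1)%nat /\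
  (a1 <= q1)%nat /\ (a2 <= q2)%nat /\
  Nat.gcd a1 q1 = 1%nat /\ Nat.gcd a2 q2 = 1%nat /\
  INR a1 / INR q1 < alpha < INR a2 / INR q2 /\
  forall a q : nat, (1 <= q <= Q - 1)%nat ->
    ~ (INR a1 / INR q1 < INR a / INR q < INR a2 / INR q2).

Inductive letter := LA | LB | LC.

Definition letter_len (alpha : R) (a1 q1 a2 q2 : nat) (l : letter) : R :=
  match l with
  | LA => INR q1 * alpha - INR a1
  | LB => INR a2 - INR q2 * alpha
  | LC => (INR q1 * alpha - INR a1) + (INR a2 - INR q2 * alpha)
  end.

Definition fwd (alpha : R) (n m : nat) : R := frac_part ((INR m - INR n) * alpha).

(* {m alpha} is the point of S_Q(alpha) immediately following {n alpha}
   (going around the circle); the gap starting at {n alpha} has length fwd n m. *)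
Definition next_pt (alpha : R) (Q n m : nat) : Prop :=
  (m < Q)%nat /\ m <> n /\
  forall m', (m' < Q)%nat -> m' <> n -> fwd alpha n m <= fwd alpha n m'.

(* The word of labels of the k = length w consecutive gaps starting at the
   gap beginning at {n alpha} equals w. *)
Definition word_at (alpha : R) (Q a1 q1 a2 q2 : nat) (w : list letter) (n : nat) : Prop :=
  exists s : nat -> nat, s 0%nat = n /\
    forall i, (i < length w)%nat ->
      next_pt alpha Q (s i) (s (S i)) /\
      fwd alpha (s i) (s (S i)) = letter_len alpha a1 q1 a2 q2 (nth i w LA).

Definition count_lt (Q : nat) (P : nat -> Prop) : nat :=
  length (filter (fun n => if excluded_middle_informative (P n) then true else false)
                 (seq 0 Q)).

(* #{Gamma in G_{Q,k}(alpha) : Gamma = w}: gaps are indexed by their left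
   endpoint {n alpha}, 0 <= n < Q. *)
Definition count_word (Q : nat) (alpha : R) (a1 q1 a2 q2 : nat) (w : list letter) : nat :=
  count_lt Q (word_at alpha Q a1 q1 a2 q2 w).

(* Since a1/q1 < a2/q2 are neighbours in the Farey sequence of order Q - 1, we have
   a2 q1 - a1 q2 = 1 and q1 + q2 >= Q.  Writing every displacement {(m - n) alpha} as an
   integer combination of A = q1 alpha - a1 and B = a2 - q2 alpha shows that the point of
   S_Q(alpha) following {n alpha} is {(n + q1) alpha} (gap A) if n < Q - q1,
   {(n - q2) alpha} (gap B) if n >= q2, and {(n + q1 - q2) alpha} (gap C) otherwise.
   Hence the n at which a word w starts form an integer interval whose endpoints are built
   from Q, q1, q2 by translations, max and min; after division by Q they become Lipschitz
   functions of (q1/Q, q2/Q). *)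

From Stdlib Require Import Reals List Lra Lia ZArith ClassicalEpsilon.
Import ListNotations.
Open Scope R_scope.

Lemma frac_part_IZR_plus (p : Z) (e : R) : 0 <= e < 1 -> frac_part (IZR p + e) = e.
Proof. intros He. now destruct (Int_part_frac_part_spec (IZR p + e) p e He eq_refl). Qed.

Lemma irrational_int_multiple (alpha : R) (d p : Z) :
  irrational alpha -> IZR d * alpha = IZR p -> d = 0%Z.
Proof.
  intros Hirr E. destruct (Z.eq_dec d 0) as [|Hd]; [assumption|exfalso].
  assert (Hd' : IZR d <> 0) by (intro; apply Hd, eq_IZR_R0; assumption).
  apply (Hirr p d Hd'). rewrite <- E. field. exact Hd'.
Qed.

Lemma lt_comb_signs (x y : R) (s t : Z) :
  0 < x -> 0 < y -> IZR s * x < IZR t * y ->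
  ((0 <= s)%Z -> (1 <= t)%Z) /\ ((t <= 0)%Z -> (s <= -1)%Z).
Proof.
  intros Hx Hy H. split; intros Hst; apply Z.nlt_ge; intros Hts.
  - assert (IZR t <= 0) by (apply IZR_le; lia).
    assert (0 <= IZR s) by (apply IZR_le; lia). nra.
  - assert (IZR t <= 0) by (apply IZR_le; lia).
    assert (0 <= IZR s) by (apply IZR_le; lia). nra.
Qed.

Lemma Rdiv_lt_cross (a b c d : R) : 0 < c -> 0 < d -> a / c < b / d <-> a * d < b * c.
Proof.
  intros Hc Hd.
  assert (Ea : a * d = a / c * (c * d)) by (field; lra).
  assert (Eb : b * c = b / d * (c * d)) by (field; lra).
  rewrite Ea, Eb. split; intros H.
  - apply Rmult_lt_compat_r; nra.
  - apply Rmult_lt_reg_r in H; nra.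
Qed.

Lemma INR_div_lt_iff (a b q q' : nat) :
  (0 < q)%nat -> (0 < q')%nat ->
  INR a / INR q < INR b / INR q' <-> (a * q' < b * q)%nat.
Proof.
  intros Hq Hq'. rewrite Rdiv_lt_cross by (apply lt_0_INR; assumption).
  rewrite <- !mult_INR. split; [apply INR_lt | apply lt_INR].
Qed.

Lemma coprime_common_divisor (a b : nat) (d : Z) :
  Nat.gcd a b = 1%nat -> (0 <= d)%Z -> (d | Z.of_nat a)%Z -> (d | Z.of_nat b)%Z -> d = 1%Z.
Proof.
  intros Hab Hd Ha Hb. apply Z.divide_1_r_nonneg; [assumption|].
  destruct (Nat.gcd_bezout a b) as [[x [y E]]|[x [y E]]]; rewrite Hab in E.
  - replace 1%Z with (Z.of_nat x * Z.of_nat a - Z.of_nat y * Z.of_nat b)%Z by lia.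
    apply Z.divide_sub_r; apply Z.divide_mul_r; assumption.
  - replace 1%Z with (Z.of_nat x * Z.of_nat b - Z.of_nat y * Z.of_nat a)%Z by lia.
    apply Z.divide_sub_r; apply Z.divide_mul_r; assumption.
Qed.

Lemma inverse_in_window (a q m : nat) :
  (1 <= q)%nat -> Nat.gcd a q = 1%nat ->
  exists p' q' : nat, (q * p' = a * q' + 1)%nat /\ (m <= q' < m + q)%nat.
Proof.
  intros Hq Haq.
  destruct (Nat.gcd_bezout_pos q a Hq) as (x & y & Hxy).
  rewrite Nat.gcd_comm, Haq in Hxy.
  set (t := ((Z.of_nat m + Z.of_nat q - 1 - Z.of_nat y) / Z.of_nat q)%Z).
  set (r := ((Z.of_nat m + Z.of_nat q - 1 - Z.of_nat y) mod Z.of_nat q)%Z).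
  assert (Hdm : (Z.of_nat m + Z.of_nat q - 1 - Z.of_nat y = Z.of_nat q * t + r)%Z)
    by (apply Z.div_mod; lia).
  assert (Hr : (0 <= r < Z.of_nat q)%Z) by (apply Z.mod_pos_bound; lia).
  set (q' := (Z.of_nat y + t * Z.of_nat q)%Z).
  set (p' := (Z.of_nat x + t * Z.of_nat a)%Z).
  assert (Hdet : (Z.of_nat q * p' = Z.of_nat a * q' + 1)%Z) by (unfold p', q'; lia).
  assert (Hwin : (Z.of_nat m <= q' < Z.of_nat m + Z.of_nat q)%Z) by (unfold q'; lia).
  assert (Hp' : (0 <= p')%Z) by nia.
  exists (Z.to_nat p'), (Z.to_nat q'). split; [|lia].
  apply Nat2Z.inj. rewrite Nat2Z.inj_add, !Nat2Z.inj_mul, !Z2Nat.id by lia. lia.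
Qed.

Section FareyNeighbours.

Variables (Q a1 q1 a2 q2 : nat).
Hypotheses (Hq1 : (1 <= q1 <= Q - 1)%nat) (Hq2 : (1 <= q2 <= Q - 1)%nat).
Hypothesis Hlt : (a1 * q2 < a2 * q1)%nat.
Hypothesis Hempty :
  forall a q, (1 <= q <= Q - 1)%nat -> ~ (a1 * q < a * q1 /\ a * q2 < a2 * q)%nat.

Lemma farey_neighbours_denominators : (Q <= q1 + q2)%nat.
Proof.
  apply Nat.nlt_ge. intros Hsum.
  apply (Hempty (a1 + a2) (q1 + q2)); [lia|]. split; nia.
Qed.

Lemma farey_neighbours_det :
  Nat.gcd a1 q1 = 1%nat -> Nat.gcd a2 q2 = 1%nat -> (a2 * q1 = a1 * q2 + 1)%nat.
Proof.
  intros Hg1 Hg2.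
  destruct (inverse_in_window a1 q1 (Q - q1) ltac:(lia) Hg1) as (p & q & Hpq & Hwin).
  assert (Hle : (a2 * q <= p * q2)%nat).
  { apply Nat.nlt_ge. intros Hgt. apply (Hempty p q); [lia|]. split; nia. }
  set (D := (Z.of_nat a2 * Z.of_nat q1 - Z.of_nat a1 * Z.of_nat q2)%Z).
  assert (HD : (1 <= D)%Z) by (unfold D; lia).
  assert (Hid : (Z.of_nat q1 * (Z.of_nat p * Z.of_nat q2 - Z.of_nat a2 * Z.of_nat q)
                 = Z.of_nat q2 - Z.of_nat q * D)%Z) by (unfold D; nia).
  (* p/q lies weakly right of a2/q2; strictly would force q2 >= q1 + q >= Q *)
  assert (Heq : (Z.of_nat p * Z.of_nat q2 = Z.of_nat a2 * Z.of_nat q)%Z).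
  { destruct (Z.eq_dec (Z.of_nat p * Z.of_nat q2) (Z.of_nat a2 * Z.of_nat q)) as [|Hne];
      [assumption|exfalso].
    assert (Z.of_nat q1 <= Z.of_nat q2 - Z.of_nat q * D)%Z by nia.
    assert (Z.of_nat q <= Z.of_nat q * D)%Z by nia.
    lia. }
  assert (Hq2D : Z.of_nat q2 = (Z.of_nat q * D)%Z)
    by (rewrite Heq, Z.sub_diag, Z.mul_0_r in Hid; lia).
  assert (Ha2D : Z.of_nat a2 = (Z.of_nat p * D)%Z)
    by (apply (Z.mul_cancel_l _ _ (Z.of_nat q)); nia).
  enough (D = 1%Z) by (unfold D in *; lia).
  apply (coprime_common_divisor a2 q2); [assumption|lia| |].
  - exists (Z.of_nat p). lia.
  - exists (Z.of_nat q). lia.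
Qed.

End FareyNeighbours.

Definition farey_neighbours (Q a1 q1 a2 q2 : nat) : Prop :=
  (1 <= q1 <= Q - 1)%nat /\ (1 <= q2 <= Q - 1)%nat /\ (Q <= q1 + q2)%nat /\
  (a2 * q1 = a1 * q2 + 1)%nat.

Lemma farey_consec_neighbours (Q : nat) (alpha : R) (a1 q1 a2 q2 : nat) :
  farey_consec Q alpha a1 q1 a2 q2 ->
  farey_neighbours Q a1 q1 a2 q2 /\
  0 < INR q1 * alpha - INR a1 /\ 0 < INR a2 - INR q2 * alpha.
Proof.
  intros (Hq1 & Hq2 & _ & _ & Hg1 & Hg2 & [Hlo Hhi] & Hempty).
  assert (Hq1' : 0 < INR q1) by (apply lt_0_INR; lia).
  assert (Hq2' : 0 < INR q2) by (apply lt_0_INR; lia).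
  assert (Hlt : (a1 * q2 < a2 * q1)%nat)
    by (apply INR_div_lt_iff; [lia|lia|lra]).
  assert (Hempty' : forall a q, (1 <= q <= Q - 1)%nat ->
                      ~ (a1 * q < a * q1 /\ a * q2 < a2 * q)%nat).
  { intros a q Hq [H1 H2]. apply (Hempty a q Hq).
    split; apply INR_div_lt_iff; lia. }
  rewrite <- (Rdiv_1_r alpha) in Hlo, Hhi.
  apply (Rdiv_lt_cross _ _ _ _ Hq1' Rlt_0_1) in Hlo.
  apply (Rdiv_lt_cross _ _ _ _ Rlt_0_1 Hq2') in Hhi.
  split; [|split; lra].
  split; [assumption|split; [assumption|split]].
  - exact (farey_neighbours_denominators Q a1 q1 a2 q2 Hq1 Hq2 Hlt Hempty').
  - exact (farey_neighbours_det Q a1 q1 a2 q2 Hq1 Hq2 Hlt Hempty' Hg1 Hg2).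
Qed.

(* A gap of type [l] leads from {n alpha} to {(n + coef1 l * q1 + coef2 l * q2) alpha}
   and has length coef1 l * (q1 alpha - a1) + coef2 l * (q2 alpha - a2). *)
Definition coef1 (l : letter) : Z := match l with LA | LC => 1 | LB => 0 end.
Definition coef2 (l : letter) : Z := match l with LA => 0 | LB | LC => -1 end.

Lemma letter_len_coef (alpha : R) (a1 q1 a2 q2 : nat) (l : letter) :
  letter_len alpha a1 q1 a2 q2 l =
  IZR (coef1 l) * (INR q1 * alpha - INR a1) + IZR (coef2 l) * (INR q2 * alpha - INR a2).
Proof. destruct l; simpl; ring. Qed.

Definition label_lo (Q z1 z2 : Z) (l : letter) : Z :=
  match l with LA => 0 | LB => z2 | LC => Q - z1 end.
Definition label_hi (Q z1 z2 : Z) (l : letter) : Z :=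
  match l with LA => Q - z1 | LB => Q | LC => z2 end.

Fixpoint word_lo (Q z1 z2 : Z) (w : list letter) : Z :=
  match w with
  | [] => 0
  | l :: w' => Z.max (label_lo Q z1 z2 l) (word_lo Q z1 z2 w' - (coef1 l * z1 + coef2 l * z2))
  end.
Fixpoint word_hi (Q z1 z2 : Z) (w : list letter) : Z :=
  match w with
  | [] => Q
  | l :: w' => Z.min (label_hi Q z1 z2 l) (word_hi Q z1 z2 w' - (coef1 l * z1 + coef2 l * z2))
  end.

Lemma word_lo_nonneg (Q z1 z2 : Z) (w : list letter) :
  (0 <= z1 <= Q)%Z -> (0 <= z2 <= Q)%Z -> (0 <= word_lo Q z1 z2 w)%Z.
Proof. intros H1 H2. destruct w as [|[] w]; simpl; lia. Qed.

Lemma word_hi_le (Q z1 z2 : Z) (w : list letter) :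
  (0 <= z1 <= Q)%Z -> (0 <= z2 <= Q)%Z -> (word_hi Q z1 z2 w <= Q)%Z.
Proof. intros H1 H2. destruct w as [|[] w]; simpl; lia. Qed.

Lemma count_lt_interval (N : nat) (P : nat -> Prop) (lo hi : Z) :
  (0 <= lo)%Z -> (forall n, (n < N)%nat -> P n <-> (lo <= Z.of_nat n < hi)%Z) ->
  count_lt N P = Z.to_nat (Z.min hi (Z.of_nat N) - lo).
Proof.
  intros Hlo HP. unfold count_lt.
  induction N as [|N IH]; [cbn [seq filter length]; lia|]. rewrite seq_S, filter_app, length_app, IH by (intros; apply HP; lia).
  simpl. destruct (excluded_middle_informative (P N)) as [HN|HN];
    rewrite (HP N) in HN by lia; simpl; lia.
Qed.

Section SuccessorMap.

Variables (Q a1 q1 a2 q2 : nat) (alpha : R).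
Hypothesis Hnb : farey_neighbours Q a1 q1 a2 q2.
Hypothesis Hirr : irrational alpha.
Hypotheses (HA : 0 < INR q1 * alpha - INR a1) (HB : 0 < INR a2 - INR q2 * alpha).

Local Notation len := (letter_len alpha a1 q1 a2 q2).

Definition gap_label (n : nat) : letter :=
  if (n + q1 <? Q)%nat then LA else if (q2 <=? n)%nat then LB else LC.

Definition gap_succ (n : nat) : nat :=
  if (n + q1 <? Q)%nat then (n + q1)%nat
  else if (q2 <=? n)%nat then (n - q2)%nat else (n + q1 - q2)%nat.

Lemma gap_succ_shift (n : nat) : (n < Q)%nat ->
  (gap_succ n < Q)%nat /\
  Z.of_nat (gap_succ n) =
    (Z.of_nat n + coef1 (gap_label n) * Z.of_nat q1 + coef2 (gap_label n) * Z.of_nat q2)%Z.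
Proof.
  destruct Hnb as (Hq1 & Hq2 & Hsum & _). intros Hn. unfold gap_succ, gap_label.
  destruct (Nat.ltb_spec (n + q1) Q); [|destruct (Nat.leb_spec q2 n)]; cbn [coef1 coef2]; lia.
Qed.

Lemma gap_weights :
  (INR q1 * alpha - INR a1) * INR q2 + (INR a2 - INR q2 * alpha) * INR q1 = 1.
Proof.
  destruct Hnb as (_ & _ & _ & Hdet).
  apply (f_equal INR) in Hdet. rewrite plus_INR, !mult_INR in Hdet. simpl in Hdet. lra.
Qed.

Lemma letter_len_pos (l : letter) : 0 < len l.
Proof. destruct l; simpl; lra. Qed.

Lemma gap_label_len_lt_1 (n : nat) : (n < Q)%nat -> len (gap_label n) < 1.
Proof.
  destruct Hnb as (Hq1 & Hq2 & Hsum & _). intros Hn.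
  pose proof gap_weights as Hw.
  unfold gap_label. destruct (Nat.ltb_spec (n + q1) Q); [|destruct (Nat.leb_spec q2 n)]; simpl.
  - assert (1 <= INR q2) by (apply (le_INR 1); lia).
    assert (0 < INR q1) by (apply lt_0_INR; lia). nra.
  - assert (1 <= INR q1) by (apply (le_INR 1); lia).
    assert (0 < INR q2) by (apply lt_0_INR; lia). nra.
  - assert (2 <= INR q1) by (apply (le_INR 2); lia).
    assert (2 <= INR q2) by (apply (le_INR 2); lia).
    assert (0 <= (INR q1 * alpha - INR a1) * (INR q2 - 2)) by (apply Rmult_le_pos; lra).
    assert (0 <= (INR a2 - INR q2 * alpha) * (INR q1 - 2)) by (apply Rmult_le_pos; lra).
    lra.
Qed.

Lemma fwd_gap_succ (n : nat) : (n < Q)%nat -> fwd alpha n (gap_succ n) = len (gap_label n).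
Proof.
  intros Hn. destruct (gap_succ_shift n Hn) as [_ Hshift].
  set (l := gap_label n) in *.
  rewrite <- (frac_part_IZR_plus (coef1 l * Z.of_nat a1 + coef2 l * Z.of_nat a2) (len l)).
  - unfold fwd. f_equal.
    rewrite letter_len_coef, !INR_IZR_INZ, <- minus_IZR, Hshift.
    rewrite !plus_IZR, !minus_IZR, !plus_IZR, !mult_IZR. ring.
  - split; [apply Rlt_le, letter_len_pos|apply gap_label_len_lt_1, Hn].
Qed.

(* The matrix ((q1, a1), (q2, a2)) is unimodular, so every displacement d alpha - p
   is an integer combination of the gap lengths q1 alpha - a1 and q2 alpha - a2. *)
Lemma fwd_comb (n m : nat) : exists u v : Z,
  (Z.of_nat m - Z.of_nat n = u * Z.of_nat q1 + v * Z.of_nat q2)%Z /\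
  fwd alpha n m = IZR u * (INR q1 * alpha - INR a1) + IZR v * (INR q2 * alpha - INR a2).
Proof.
  destruct Hnb as (_ & _ & _ & Hdet).
  set (d := (Z.of_nat m - Z.of_nat n)%Z).
  set (p := Int_part ((INR m - INR n) * alpha)).
  exists (d * Z.of_nat a2 - p * Z.of_nat q2)%Z, (p * Z.of_nat q1 - d * Z.of_nat a1)%Z.
  assert (HdetZ : (Z.of_nat a2 * Z.of_nat q1 = Z.of_nat a1 * Z.of_nat q2 + 1)%Z) by lia.
  split.
  - transitivity (d * (Z.of_nat a2 * Z.of_nat q1 - Z.of_nat a1 * Z.of_nat q2))%Z;
      [rewrite HdetZ; ring|ring].
  - apply (f_equal IZR) in HdetZ. rewrite plus_IZR, !mult_IZR in HdetZ.
    unfold fwd, frac_part. fold p.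
    replace (INR m - INR n) with (IZR d) by (unfold d; rewrite minus_IZR, <- !INR_IZR_INZ; ring).
    rewrite !minus_IZR, !mult_IZR, !INR_IZR_INZ.
    transitivity ((IZR d * alpha - IZR p) * (IZR (Z.of_nat a2) * IZR (Z.of_nat q1)
                   - IZR (Z.of_nat a1) * IZR (Z.of_nat q2)));
      [rewrite HdetZ; ring|ring].
Qed.

Lemma fwd_pos (n m : nat) : m <> n -> 0 < fwd alpha n m.
Proof.
  intros Hmn. destruct (base_fp ((INR m - INR n) * alpha)) as [Hge _].
  fold (fwd alpha n m) in Hge. destruct (Rle_lt_or_eq_dec 0 (fwd alpha n m)) as [|E];
    [lra|assumption|exfalso].
  unfold fwd, frac_part in E.
  assert (Hint : IZR (Z.of_nat m - Z.of_nat n) * alpha = IZR (Int_part ((INR m - INR n) * alpha)))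
    by (rewrite minus_IZR, <- !INR_IZR_INZ; lra).
  apply irrational_int_multiple in Hint; [lia|assumption].
Qed.

Lemma fwd_gap_succ_min (n m : nat) : (n < Q)%nat -> (m < Q)%nat -> m <> n ->
  fwd alpha n (gap_succ n) <= fwd alpha n m.
Proof.
  intros Hn Hm Hmn. rewrite fwd_gap_succ, letter_len_coef by assumption.
  pose proof (fwd_pos n m Hmn) as Hpos.
  destruct (fwd_comb n m) as (u & v & Hd & Hf). rewrite Hf in Hpos |- *.
  apply Rnot_lt_le. intros Hlt.
  (* The sign constraints on (u, v) forced by 0 < u A - v B < |gap| push m out of [0, Q). *)
  set (l := gap_label n) in *.
  destruct (lt_comb_signs (INR a2 - INR q2 * alpha) (INR q1 * alpha - INR a1) v u HB HA)
    as [Hs1 Hs2]; [lra|].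
  destruct (lt_comb_signs (INR q1 * alpha - INR a1) (INR a2 - INR q2 * alpha)
              (u - coef1 l) (v - coef2 l) HA HB) as [Hs3 Hs4];
    [rewrite !minus_IZR; lra|].
  destruct Hnb as (Hq1 & Hq2 & Hsum & _).
  unfold l, gap_label in *.
  destruct (Nat.ltb_spec (n + q1) Q); [|destruct (Nat.leb_spec q2 n)]; cbn [coef1 coef2] in *;
    destruct (Z.le_gt_cases 1 u); nia.
Qed.

Lemma next_pt_gap_succ (n : nat) : (n < Q)%nat -> next_pt alpha Q n (gap_succ n).
Proof.
  intros Hn. split; [apply (gap_succ_shift n Hn)|split].
  - intros E. pose proof (fwd_gap_succ n Hn) as Hlen.
    rewrite E in Hlen. unfold fwd in Hlen. rewrite Rminus_diag, Rmult_0_l, fp_R0 in Hlen.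
    pose proof (letter_len_pos (gap_label n)). lra.
  - intros m Hm Hmn. apply fwd_gap_succ_min; assumption.
Qed.

Lemma next_pt_unique (n m m' : nat) :
  next_pt alpha Q n m -> next_pt alpha Q n m' -> m = m'.
Proof.
  intros (Hm & Hmn & Hmin) (Hm' & Hmn' & Hmin').
  assert (E : fwd alpha n m = fwd alpha n m') by (apply Rle_antisym; auto).
  unfold fwd, frac_part in E.
  assert (Hint : IZR (Z.of_nat m - Z.of_nat m') * alpha =
                 IZR (Int_part ((INR m - INR n) * alpha) - Int_part ((INR m' - INR n) * alpha)))
    by (rewrite !minus_IZR, <- !INR_IZR_INZ; lra).
  apply irrational_int_multiple in Hint; [lia|assumption].
Qed.

Lemma letter_len_inj (l l' : letter) : len l = len l' -> l = l'.
Proof.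
  intros E.
  assert (HAB : INR q1 * alpha - INR a1 <> INR a2 - INR q2 * alpha).
  { intros E'.
    assert (Hint : IZR (Z.of_nat q1 + Z.of_nat q2) * alpha = IZR (Z.of_nat a1 + Z.of_nat a2))
      by (rewrite !plus_IZR, <- !INR_IZR_INZ; lra).
    apply irrational_int_multiple in Hint; [|assumption].
    destruct Hnb as (Hq1 & _). lia. }
  destruct l, l'; simpl in E; reflexivity || exfalso; lra.
Qed.

Fixpoint reads (n : nat) (w : list letter) : Prop :=
  match w with
  | [] => True
  | l :: w' => gap_label n = l /\ reads (gap_succ n) w'
  end.

Lemma word_at_iff_reads (w : list letter) (n : nat) : (n < Q)%nat ->
  word_at alpha Q a1 q1 a2 q2 w n <-> reads n w.
Proof.
  revert n. induction w as [|l w IH]; intros n Hn; simpl.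
  - split; [trivial|]. intros _. exists (fun _ => n). split; [reflexivity|]. simpl; lia.
  - pose proof (proj1 (gap_succ_shift n Hn)) as Hsucc. split.
    + intros (s & Hs0 & Hs).
      destruct (Hs 0%nat) as [Hnext Hlen]; [simpl; lia|]. rewrite Hs0 in Hnext, Hlen.
      assert (E : s 1%nat = gap_succ n)
        by (apply (next_pt_unique n); [exact Hnext|apply next_pt_gap_succ, Hn]).
      rewrite E, fwd_gap_succ in Hlen by exact Hn.
      split; [apply letter_len_inj, Hlen|].
      apply IH; [exact Hsucc|]. rewrite <- E.
      exists (fun i => s (S i)). split; [reflexivity|].
      intros i Hi. apply (Hs (S i)). simpl; lia.
    + intros [Hl Hw]. apply IH in Hw; [|exact Hsucc].
      destruct Hw as (s & Hs0 & Hs).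
      exists (fun i => match i with 0%nat => n | S j => s j end). split; [reflexivity|].
      intros [|i] Hi.
      * rewrite Hs0. split; [apply next_pt_gap_succ, Hn|].
        rewrite fwd_gap_succ, Hl by exact Hn. reflexivity.
      * apply Hs. simpl in Hi; lia.
Qed.

Lemma gap_label_iff (n : nat) (l : letter) : (n < Q)%nat ->
  gap_label n = l <->
  (label_lo (Z.of_nat Q) (Z.of_nat q1) (Z.of_nat q2) l <= Z.of_nat n
   < label_hi (Z.of_nat Q) (Z.of_nat q1) (Z.of_nat q2) l)%Z.
Proof.
  destruct Hnb as (Hq1 & Hq2 & Hsum & _). intros Hn. unfold gap_label.
  destruct (Nat.ltb_spec (n + q1) Q); [|destruct (Nat.leb_spec q2 n)];
    destruct l; simpl; split; intros; solve [reflexivity|discriminate|lia].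
Qed.

Lemma reads_iff_interval (w : list letter) (n : nat) : (n < Q)%nat ->
  reads n w <->
  (word_lo (Z.of_nat Q) (Z.of_nat q1) (Z.of_nat q2) w <= Z.of_nat n
   < word_hi (Z.of_nat Q) (Z.of_nat q1) (Z.of_nat q2) w)%Z.
Proof.
  revert n. induction w as [|l w IH]; intros n Hn; simpl; [lia|].
  destruct (gap_succ_shift n Hn) as [Hsucc Hshift].
  rewrite (IH _ Hsucc), Hshift. split.
  - intros [Hl Hw]. pose proof (proj1 (gap_label_iff n l Hn) Hl). subst l. lia.
  - intros Hb. assert (Hl : gap_label n = l) by (apply gap_label_iff; [exact Hn|lia]).
    split; [exact Hl|]. rewrite Hl. lia.
Qed.

Lemma count_word_interval (w : list letter) :
  count_word Q alpha a1 q1 a2 q2 w =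
  Z.to_nat (word_hi (Z.of_nat Q) (Z.of_nat q1) (Z.of_nat q2) w
            - word_lo (Z.of_nat Q) (Z.of_nat q1) (Z.of_nat q2) w).
Proof.
  destruct Hnb as (Hq1 & Hq2 & _).
  set (Qz := Z.of_nat Q). set (z1 := Z.of_nat q1). set (z2 := Z.of_nat q2).
  unfold count_word. rewrite (count_lt_interval _ _ (word_lo Qz z1 z2 w) (word_hi Qz z1 z2 w)).
  - pose proof (word_hi_le Qz z1 z2 w) as Hhi. f_equal. lia.
  - apply word_lo_nonneg; lia.
  - intros n Hn. rewrite word_at_iff_reads by exact Hn. apply reads_iff_interval, Hn.
Qed.

End SuccessorMap.

Definition label_lo_R (x y : R) (l : letter) : R :=
  match l with LA => 0 | LB => y | LC => 1 - x end.
Definition label_hi_R (x y : R) (l : letter) : R :=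
  match l with LA => 1 - x | LB => 1 | LC => y end.
Definition shift_R (x y : R) (l : letter) : R := IZR (coef1 l) * x + IZR (coef2 l) * y.

Fixpoint word_lo_R (x y : R) (w : list letter) : R :=
  match w with
  | [] => 0
  | l :: w' => Rmax (label_lo_R x y l) (word_lo_R x y w' - shift_R x y l)
  end.
Fixpoint word_hi_R (x y : R) (w : list letter) : R :=
  match w with
  | [] => 1
  | l :: w' => Rmin (label_hi_R x y l) (word_hi_R x y w' - shift_R x y l)
  end.

Definition word_freq (w : list letter) (x y : R) : R :=
  Rmax 0 (word_hi_R x y w - word_lo_R x y w).

Lemma IZR_max (a b : Z) : IZR (Z.max a b) = Rmax (IZR a) (IZR b).
Proof.
  destruct (Z.le_ge_cases a b) as [H|H].
  - rewrite Z.max_r, Rmax_right by (try apply IZR_le; lia). reflexivity.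
  - rewrite Z.max_l, Rmax_left by (try apply IZR_le; lia). reflexivity.
Qed.

Lemma IZR_min (a b : Z) : IZR (Z.min a b) = Rmin (IZR a) (IZR b).
Proof.
  destruct (Z.le_ge_cases a b) as [H|H].
  - rewrite Z.min_l, Rmin_left by (try apply IZR_le; lia). reflexivity.
  - rewrite Z.min_r, Rmin_right by (try apply IZR_le; lia). reflexivity.
Qed.

Lemma RminRmult (p q r : R) : 0 <= r -> Rmin (r * p) (r * q) = r * Rmin p q.
Proof.
  intros Hr. rewrite <- (Ropp_involutive (Rmin _ _)), <- (Ropp_involutive (Rmin p q)),
    !Ropp_Rmin, !Ropp_mult_distr_r, RmaxRmult by exact Hr. ring.
Qed.

Lemma INR_Z_to_nat (z : Z) : INR (Z.to_nat z) = Rmax 0 (IZR z).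
Proof.
  destruct (Z.le_ge_cases 0 z) as [H|H].
  - rewrite INR_IZR_INZ, Z2Nat.id, Rmax_right by (try apply IZR_le; lia). reflexivity.
  - rewrite Rmax_left by (apply IZR_le; lia). replace (Z.to_nat z) with 0%nat by lia.
    reflexivity.
Qed.

Lemma word_bounds_scale (Q z1 z2 : Z) (w : list letter) : (0 < Q)%Z ->
  IZR (word_lo Q z1 z2 w) = IZR Q * word_lo_R (IZR z1 / IZR Q) (IZR z2 / IZR Q) w /\
  IZR (word_hi Q z1 z2 w) = IZR Q * word_hi_R (IZR z1 / IZR Q) (IZR z2 / IZR Q) w.
Proof.
  intros HQ. apply IZR_lt in HQ.
  induction w as [|l w [IHlo IHhi]]; simpl; [split; ring|].
  rewrite IZR_max, IZR_min, !minus_IZR, IHlo, IHhi.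
  rewrite <- RmaxRmult, <- RminRmult by lra.
  unfold shift_R. rewrite plus_IZR, !mult_IZR.
  split; f_equal; destruct l; simpl; rewrite ?minus_IZR; field; lra.
Qed.

Lemma word_freq_scale (Q q1 q2 : nat) (w : list letter) : (0 < Q)%nat ->
  INR (Z.to_nat (word_hi (Z.of_nat Q) (Z.of_nat q1) (Z.of_nat q2) w
                 - word_lo (Z.of_nat Q) (Z.of_nat q1) (Z.of_nat q2) w)) / INR Q
  = word_freq w (INR q1 / INR Q) (INR q2 / INR Q).
Proof.
  intros HQ. destruct (word_bounds_scale (Z.of_nat Q) (Z.of_nat q1) (Z.of_nat q2) w)
    as [Hlo Hhi]; [lia|].
  rewrite INR_Z_to_nat, minus_IZR, Hlo, Hhi, <- !INR_IZR_INZ.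
  apply lt_0_INR in HQ. unfold word_freq.
  rewrite <- Rmult_minus_distr_l, <- (Rmult_0_r (INR Q)) at 1.
  rewrite RmaxRmult by lra. field. lra.
Qed.

Lemma Rmax_lipschitz (a b a' b' c : R) :
  Rabs (a' - a) <= c -> Rabs (b' - b) <= c -> Rabs (Rmax a' b' - Rmax a b) <= c.
Proof.
  unfold Rmax. destruct (Rle_dec a' b'), (Rle_dec a b);
    unfold Rabs; repeat destruct Rcase_abs; lra.
Qed.

Lemma Rmin_lipschitz (a b a' b' c : R) :
  Rabs (a' - a) <= c -> Rabs (b' - b) <= c -> Rabs (Rmin a' b' - Rmin a b) <= c.
Proof.
  unfold Rmin. destruct (Rle_dec a' b'), (Rle_dec a b);
    unfold Rabs; repeat destruct Rcase_abs; lra.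
Qed.

Lemma letter_data_lipschitz (x y x' y' : R) (l : letter) :
  let d := Rabs (x' - x) + Rabs (y' - y) in
  Rabs (label_lo_R x' y' l - label_lo_R x y l) <= d /\
  Rabs (label_hi_R x' y' l - label_hi_R x y l) <= d /\
  Rabs (shift_R x' y' l - shift_R x y l) <= d.
Proof.
  unfold shift_R. destruct l; simpl; unfold Rabs; repeat destruct Rcase_abs; lra.
Qed.

Lemma word_bounds_lipschitz (x y x' y' : R) (w : list letter) :
  let d := Rabs (x' - x) + Rabs (y' - y) in
  Rabs (word_lo_R x' y' w - word_lo_R x y w) <= INR (length w) * d /\
  Rabs (word_hi_R x' y' w - word_hi_R x y w) <= INR (length w) * d.
Proof.
  intros d. assert (Hd : 0 <= d) by (unfold d; pose proof (Rabs_pos (x' - x));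
                                     pose proof (Rabs_pos (y' - y)); lra).
  induction w as [|l w [IHlo IHhi]]; simpl length.
  - simpl. rewrite !Rminus_diag, Rabs_R0. lra.
  - rewrite S_INR. pose proof (pos_INR (length w)).
    destruct (letter_data_lipschitz x y x' y' l) as (Hlo & Hhi & Hsh). fold d in Hlo, Hhi, Hsh.
    assert (Hsub : forall a a' s s', Rabs (a' - a) <= INR (length w) * d ->
                     Rabs (s' - s) <= d -> Rabs (a' - s' - (a - s)) <= (INR (length w) + 1) * d).
    { intros a a' s s' Ha Hs.
      replace (a' - s' - (a - s)) with ((a' - a) + - (s' - s)) by ring.
      eapply Rle_trans; [apply Rabs_triang|]. rewrite Rabs_Ropp. lra. }
    split; simpl; [apply Rmax_lipschitz|apply Rmin_lipschitz]; auto; nra.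
Qed.

Lemma word_freq_lipschitz (w : list letter) (x y x' y' : R) :
  Rabs (word_freq w x' y' - word_freq w x y) <=
  2 * INR (length w) * (Rabs (x' - x) + Rabs (y' - y)).
Proof.
  destruct (word_bounds_lipschitz x y x' y' w) as [Hlo Hhi]. simpl in Hlo, Hhi.
  pose proof (pos_INR (length w)).
  assert (0 <= Rabs (x' - x) + Rabs (y' - y))
    by (pose proof (Rabs_pos (x' - x)); pose proof (Rabs_pos (y' - y)); lra).
  unfold word_freq. apply Rmax_lipschitz.
  - rewrite Rminus_diag, Rabs_R0. nra.
  - replace (word_hi_R x' y' w - word_lo_R x' y' w - (word_hi_R x y w - word_lo_R x y w))
      with ((word_hi_R x' y' w - word_hi_R x y w) + - (word_lo_R x' y' w - word_lo_R x y w))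
      by ring.
    eapply Rle_trans; [apply Rabs_triang|]. rewrite Rabs_Ropp. lra.
Qed.

Lemma lipschitz_continuous_on_T (f : R -> R -> R) (K : R) : 0 <= K ->
  (forall x y x' y', Rabs (f x' y' - f x y) <= K * (Rabs (x' - x) + Rabs (y' - y))) ->
  continuous_on_T f.
Proof.
  intros HK Hf x y _ eps Heps. exists (eps / (2 * (K + 1))).
  split; [apply Rdiv_lt_0_compat; lra|].
  intros x' y' _ Hx Hy. eapply Rle_lt_trans; [apply Hf|].
  assert (Hd : Rabs (x' - x) + Rabs (y' - y) < eps / (K + 1))
    by (replace (eps / (K + 1)) with (2 * (eps / (2 * (K + 1)))) by (field; lra); lra).
  apply Rle_lt_trans with ((K + 1) * (Rabs (x' - x) + Rabs (y' - y))).
  - pose proof (Rabs_pos (x' - x)). pose proof (Rabs_pos (y' - y)). nra.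
  - apply (Rmult_lt_compat_l (K + 1)) in Hd; [|lra].
    replace ((K + 1) * (eps / (K + 1))) with eps in Hd by (field; lra). exact Hd.
Qed.

Lemma word_freq_bounds (w : list letter) (x y : R) :
  w <> [] -> inT x y -> 0 <= word_freq w x y <= 1.
Proof.
  intros Hw (Hx & Hy & Hxy). destruct w as [|l w]; [contradiction|].
  unfold word_freq. split; [apply Rmax_l|]. simpl.
  pose proof (Rmin_l (label_hi_R x y l) (word_hi_R x y w - shift_R x y l)).
  pose proof (Rmax_l (label_lo_R x y l) (word_lo_R x y w - shift_R x y l)).
  assert (label_hi_R x y l - label_lo_R x y l <= 1) by (destruct l; simpl; lra).
  apply Rmax_lub; lra.
Qed.

Lemma word_freq_single (l : letter) (x y : R) :
  inT x y -> word_freq [l] x y = label_hi_R x y l - label_lo_R x y l.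
Proof.
  intros (Hx & Hy & Hxy). unfold word_freq.
  destruct l; cbn [word_hi_R word_lo_R label_hi_R label_lo_R]; unfold shift_R;
    cbn [coef1 coef2]; unfold Rmax, Rmin; repeat destruct Rle_dec; lra.
Qed.

Theorem lemma3 :
  forall (k : nat), (1 <= k)%nat ->
  forall w : list letter, length w = k ->
  exists f : R -> R -> R,
    continuous_on_T f /\
    (forall x y, inT x y -> 0 <= f x y <= 1) /\
    (forall (Q : nat) (alpha : R) (a1 q1 a2 q2 : nat),
        (2 <= Q)%nat -> irrational alpha -> 0 < alpha < 1 ->
        farey_consec Q alpha a1 q1 a2 q2 ->
        INR (count_word Q alpha a1 q1 a2 q2 w) / INR Q
          = f (INR q1 / INR Q) (INR q2 / INR Q)) /\
    (w = [LA] -> forall x y, inT x y -> f x y = 1 - x) /\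
    (w = [LB] -> forall x y, inT x y -> f x y = 1 - y) /\
    (w = [LC] -> forall x y, inT x y -> f x y = x + y - 1).
Proof.
  intros k Hk w Hw. exists (word_freq w). split; [|split; [|split; [|split; [|split]]]].
  - apply (lipschitz_continuous_on_T _ (2 * INR (length w))).
    + pose proof (pos_INR (length w)). lra.
    + apply word_freq_lipschitz.
  - intros x y HT. apply word_freq_bounds; [|exact HT]. intros ->. simpl in Hw. lia.
  - intros Q alpha a1 q1 a2 q2 _ Hirr _ Hfarey.
    destruct (farey_consec_neighbours Q alpha a1 q1 a2 q2 Hfarey) as (Hnb & HA & HB).
    rewrite (count_word_interval Q a1 q1 a2 q2 alpha Hnb Hirr HA HB).
    apply word_freq_scale. destruct Hnb. lia.
  - intros -> x y HT. rewrite word_freq_single by exact HT. simpl. ring.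
  - intros -> x y HT. rewrite word_freq_single by exact HT. simpl. ring.
  - intros -> x y HT. rewrite word_freq_single by exact HT. simpl. ring.
Qed.
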